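(* Let $(G,\sigma)$ be a connection graph and $i\neq j\in V$. Writing $\mathcal{C}^\sigma(i,j)=\begin{bmatrix}\mathcal{C}^\sigma_{ii}&\mathcal{C}^\sigma_{ij}\\ \mathcal{C}^\sigma_{ji}&\mathcal{C}^\sigma_{jj}\end{bmatrix}$, the block $\mathcal{C}^\sigma_{ii}$ is invertible and $$\Omega^0_{ij}=-(\mathcal{C}^\sigma_{ii})^{-1}\mathcal{C}^\sigma_{ij}.$$
   Context: A connection graph $(G,\sigma)$: finite connected weighted graph $G=(V,E,W)$, $V=\{1,\dots,n\}$, $w_{xy}>0$ iff $\{x,y\}\in E$, $\deg(x)=\sum_y w_{xy}$, and $\sigma$ mapping oriented edges to $\mathsf{O}(d)$ with $\sigma_{yx}=\sigma_{xy}^{\mathrm T}$. Connection Laplacian $\mathcal{L}$: $nd\times nd$ block matrix with blocks $\deg(x)I_d$ on the diagonal, $-w_{xy}\sigma_{xy}$ for $x\sim y$, $0$ otherwise. For $M=\begin{bmatrix}A&B\\C&D\end{bmatrix}$, $M/D=A-BD^\dagger C$. The conductance matrix $\mathcal{C}^\sigma(i,j)=\mathcal{L}/\mathcal{L}_{\{i,j\}^c,\{i,j\}^c}\in\mathbb{R}^{2d\times 2d}$, blocks ordered $i$ then $j$. $(X_t)$: simple random walk with transition probabilities $w_{xy}/\deg(x)$; $T^0_j=\inf\{t\ge0:X_t=j\}$; $\Omega^0_{ij}=\mathbb{E}\big[\prod_{\ell=1}^{T^0_j}\sigma_{X_{\ell-1}X_\ell}\mid X_0=i\big]$ (ordered product).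 *)

From HB Require Import structures.
From mathcomp Require Import all_boot all_order all_algebra.
From mathcomp Require Import all_classical all_reals all_analysis.
Set Implicit Arguments. Unset Strict Implicit. Unset Printing Implicit Defensive.
Import Order.TTheory GRing.Theory Num.Theory.
Import numFieldNormedType.Exports.
Local Open Scope ring_scope.

Section ConnectionGraph.
Variables (R : realType) (n d : nat).
Variable w : 'I_n -> 'I_n -> R.            (* edge weights, w x y > 0 iff x ~ y *)
Variable sigma : 'I_n -> 'I_n -> 'M[R]_d.

Definition is_weighted_graph : Prop :=
  [/\ forall x y, 0 <= w x y, forall x y, w x y = w y x & forall x, w x x = 0].
Definition graph_connected : Prop :=
  forall x y : 'I_n, connect [rel u v | 0 < w u v] x y.
Definition is_connection : Prop :=
  forall x y, 0 < w x y ->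
    sigma y x = (sigma x y)^T /\ (sigma x y)^T *m sigma x y = 1%:M.

Definition deg (x : 'I_n) : R := \sum_(y < n) w x y.

(* Connection Laplacian, indexed by pairs (vertex, coordinate):
   block (x,x) = deg x I_d, block (x,y) = - w x y sigma x y for x != y
   (zero when x,y are not adjacent since then w x y = 0). *)
Definition conn_lap (u v : 'I_n * 'I_d) : R :=
  if u.1 == v.1 then deg u.1 * (u.2 == v.2)%:R
  else - (w u.1 v.1 * sigma u.1 v.1 u.2 v.2).

(* Moore--Penrose pseudoinverse, characterised by the Penrose equations *)
Definition penrose m k (A : 'M[R]_(m, k)) (X : 'M[R]_(k, m)) : Prop :=
  [/\ A *m X *m A = A, X *m A *m X = X,
      (A *m X)^T = A *m X & (X *m A)^T = X *m A].
Definition mpinv m k (A : 'M[R]_(m, k)) : 'M[R]_(k, m) :=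
  xget 0 (penrose A).

Section Pair.
Variables (i j : 'I_n).

(* boundary indices: first the d coordinates at i, then those at j *)
Definition bnd (k : 'I_(d + d)) : 'I_n * 'I_d :=
  match fintype.split k with inl a => (i, a) | inr a => (j, a) end.
Definition interior : {set 'I_n * 'I_d} := [set u | (u.1 != i) && (u.1 != j)].
Definition intv (k : 'I_#|interior|) : 'I_n * 'I_d := enum_val k.

Definition LA : 'M[R]_(d + d) := \matrix_(k, l) conn_lap (bnd k) (bnd l).
Definition LB : 'M[R]_(d + d, #|interior|) := \matrix_(k, l) conn_lap (bnd k) (intv l).
Definition LC : 'M[R]_(#|interior|, d + d) := \matrix_(k, l) conn_lap (intv k) (bnd l).
Definition LD : 'M[R]_#|interior| := \matrix_(k, l) conn_lap (intv k) (intv l).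

(* conductance matrix C^sigma(i,j) = L / L_{{i,j}^c,{i,j}^c} *)
Definition conductance : 'M[R]_(d + d) := LA - LB *m mpinv LD *m LC.
Definition C_ii : 'M[R]_d := ulsubmx conductance.
Definition C_ij : 'M[R]_d := ursubmx conductance.

(* Random-walk paths X_0 = i, ..., X_t = j with X_l != j for l < t,
   i.e. exactly the trajectories with T^0_j = t. *)
Definition hit_paths (t : nat) : {set {ffun 'I_t.+1 -> 'I_n}} :=
  [set p : {ffun 'I_t.+1 -> 'I_n} | [&& p ord0 == i, p ord_max == j &
     [forall l : 'I_t.+1, (l < t)%N ==> (p l != j)]]].

Definition path_prob t (p : {ffun 'I_t.+1 -> 'I_n}) : R :=
  \prod_(l < t) (w (p (inord l)) (p (inord l.+1)) / deg (p (inord l))).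

Definition path_hol t (p : {ffun 'I_t.+1 -> 'I_n}) : 'M[R]_d :=
  foldr (fun M acc => M *m acc) 1%:M
    [seq sigma (p (inord l)) (p (inord l.+1)) | l <- iota 0 t].

(* E[ prod sigma ; T^0_j = t | X_0 = i ] *)
Definition Omega_term (t : nat) : 'M[R]_d :=
  \sum_(p in hit_paths t) path_prob p *: path_hol p.

Definition Omega0 : 'M[R]_d :=
  \matrix_(a, b) limn (series (fun t => Omega_term t a b) : R^nat).

End Pair.
End ConnectionGraph.

From Pilot Require Import Defs.
From HB Require Import structures.
From mathcomp Require Import all_boot all_order all_algebra.
From mathcomp Require Import all_classical all_reals all_analysis.
From mathcomp Require Import ring.
Import Order.TTheory GRing.Theory Num.Theory.
Import numFieldNormedType.Exports.
Set Implicit Arguments. Unset Strict Implicit. Unset Printing Implicit Defensive.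
Local Open Scope ring_scope.

(* Conditioning on the first step of the walk, the partial sums of the series defining
   Omega^0_{xj} obey the recursion of the walk.  The holonomies along paths of positive
   probability are orthogonal, so the entries are dominated by hitting probabilities; hence the
   series converge, and the limit x |-> Omega^0_{xj} equals I at j and is annihilated by the
   connection Laplacian L at every x <> j.
   The energy identity  sum_{x,y} w_xy |z_x - sigma_xy z_y|^2 = 2 <z, L z>  and connectivity
   show that a field vanishing at j, harmonic off {i, j} and with <z_i, (L z)_i> = 0 is zero.
   This makes the interior block of L and C_ii invertible, and since the Schur complement maps
   boundary values of a field harmonic in the interior to the boundary values of L z, it gives
   C_ii Omega^0_{ij} + C_ij Omega^0_{jj} = (L Omega^0_{.j})_i = 0. *)

Section PathCons.
Variable T : Type.

Definition pcons t (x : T) (q : {ffun 'I_t.+1 -> T}) : {ffun 'I_t.+2 -> T} :=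
  [ffun k => if unlift ord0 k is Some l then q l else x].

Definition ptail t (p : {ffun 'I_t.+2 -> T}) : {ffun 'I_t.+1 -> T} :=
  [ffun l => p (lift ord0 l)].

Lemma pcons0 t x (q : {ffun 'I_t.+1 -> T}) : pcons x q ord0 = x.
Proof. by rewrite ffunE unlift_none. Qed.

Lemma pcons_lift t x (q : {ffun 'I_t.+1 -> T}) l : pcons x q (lift ord0 l) = q l.
Proof. by rewrite ffunE liftK. Qed.

Lemma pcons_inordS t x (q : {ffun 'I_t.+1 -> T}) k : (k < t.+1)%N ->
  pcons x q (inord k.+1) = q (inord k).
Proof.
move=> lt_k; have -> : (inord k.+1 : 'I_t.+2) = lift ord0 (inord k : 'I_t.+1).
  by apply: val_inj; rewrite /= /bump /= !inordK.
exact: pcons_lift.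
Qed.

Lemma pcons_inord0 t x (q : {ffun 'I_t.+1 -> T}) : pcons x q (inord 0) = x.
Proof. by rewrite (inord_val ord0) pcons0. Qed.

Lemma pcons_inord1 t x (q : {ffun 'I_t.+1 -> T}) : pcons x q (inord 1) = q ord0.
Proof. by rewrite pcons_inordS // (inord_val ord0). Qed.

Lemma pcons_max t x (q : {ffun 'I_t.+1 -> T}) : pcons x q ord_max = q ord_max.
Proof.
have -> : (ord_max : 'I_t.+2) = lift ord0 (ord_max : 'I_t.+1) by apply: val_inj.
exact: pcons_lift.
Qed.

Lemma pcons_ptail t (p : {ffun 'I_t.+2 -> T}) : pcons (p ord0) (ptail p) = p.
Proof.
apply/ffunP=> k; case: (unliftP ord0 k) => [l ->|->]; last by rewrite pcons0.
by rewrite pcons_lift ffunE.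
Qed.

Lemma ptail_pcons t x (q : {ffun 'I_t.+1 -> T}) : ptail (pcons x q) = q.
Proof. by apply/ffunP=> l; rewrite ffunE pcons_lift. Qed.

End PathCons.

Section ColumnForms.
Variable R : realDomainType.

Definition dotmx m (u v : 'cV[R]_m) : R := (u^T *m v) 0 0.
Definition sqnorm m (u : 'cV[R]_m) : R := dotmx u u.

Lemma dotmxE m (u v : 'cV[R]_m) : dotmx u v = \sum_a u a 0 * v a 0.
Proof. by rewrite /dotmx mxE; apply: eq_bigr => a _; rewrite mxE. Qed.

Lemma dotmx0l m (v : 'cV[R]_m) : dotmx 0 v = 0.
Proof. by rewrite dotmxE big1 // => a _; rewrite mxE mul0r. Qed.

Lemma dotmx0r m (u : 'cV[R]_m) : dotmx u 0 = 0.
Proof. by rewrite dotmxE big1 // => a _; rewrite mxE mulr0. Qed.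

Lemma dotmxBr m (u v1 v2 : 'cV[R]_m) : dotmx u (v1 - v2) = dotmx u v1 - dotmx u v2.
Proof.
by rewrite !dotmxE -sumrB; apply: eq_bigr => a _; rewrite !mxE mulrBr.
Qed.

Lemma dotmxZr m (u v : 'cV[R]_m) a : dotmx u (a *: v) = a * dotmx u v.
Proof.
by rewrite !dotmxE mulr_sumr; apply: eq_bigr => b _; rewrite !mxE mulrCA.
Qed.

Lemma dotmx_sumr m I (r : seq I) (P : pred I) (u : 'cV[R]_m) (v : I -> 'cV[R]_m) :
  dotmx u (\sum_(k <- r | P k) v k) = \sum_(k <- r | P k) dotmx u (v k).
Proof.
rewrite dotmxE; under eq_bigr => a _ do rewrite summxE mulr_sumr.
by rewrite exchange_big; apply: eq_bigr => k _; rewrite dotmxE.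
Qed.

Lemma sqnormB m (u v : 'cV[R]_m) :
  sqnorm (u - v) = sqnorm u - 2 * dotmx u v + sqnorm v.
Proof.
rewrite /sqnorm !dotmxE mulr_sumr -sumrB -big_split /=.
by apply: eq_bigr => a _; rewrite !mxE; ring.
Qed.

Lemma sqnorm_ge0 m (u : 'cV[R]_m) : 0 <= sqnorm u.
Proof. by rewrite /sqnorm dotmxE; apply: sumr_ge0 => a _; rewrite -expr2 sqr_ge0. Qed.

Lemma sqnorm_eq0 m (u : 'cV[R]_m) : sqnorm u = 0 -> u = 0.
Proof.
rewrite /sqnorm dotmxE => /psumr_eq0P u0; apply/matrixP => a b.
have /eqP := u0 (fun c _ => sqr_ge0 (u c 0)) a isT.
by rewrite (ord1 b) mxE mulf_eq0 orbb => /eqP.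
Qed.

Lemma sqnorm_orthomx m (M : 'M[R]_m) (u : 'cV[R]_m) :
  M^T *m M = 1%:M -> sqnorm (M *m u) = sqnorm u.
Proof.
by move=> MK; rewrite /sqnorm /dotmx trmx_mul mulmxA -(mulmxA u^T) MK mulmx1.
Qed.

Lemma orthomx_entry_le1 m (M : 'M[R]_m) a b : M^T *m M = 1%:M -> `|M a b| <= 1.
Proof.
move=> MK; have : \sum_c M c b ^+ 2 = 1.
  have := congr1 (fun N : 'M[R]_m => N b b) MK; rewrite !mxE eqxx mulr1n => <-.
  by apply: eq_bigr => c _; rewrite mxE expr2.
rewrite (bigD1 a) //= => sum_sq.
have sq_le1 : M a b ^+ 2 <= 1.
  by rewrite -sum_sq lerDl; apply: sumr_ge0 => c _; apply: sqr_ge0.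
by rewrite -(expr_le1 (n := 2)) // real_normK // num_real.
Qed.

End ColumnForms.

Lemma orthomx_foldr_mulmx (R : comRingType) m (s : seq 'M[R]_m) :
  all (fun M => M^T *m M == 1%:M) s ->
  (foldr mulmx 1%:M s)^T *m foldr mulmx 1%:M s = 1%:M.
Proof.
elim: s => [|M s IHs] /=; first by rewrite trmx1 mul1mx.
case/andP=> /eqP MK /IHs sK.
by rewrite trmx_mul -mulmxA (mulmxA M^T) MK mul1mx.
Qed.

Lemma unitmx_ker_col (F : fieldType) m (A : 'M[F]_m) :
  (forall v : 'cV_m, A *m v = 0 -> v = 0) -> A \in unitmx.
Proof.
move=> Ainj; rewrite -unitmx_tr -row_free_unit; apply: inj_row_free => v vA0.
apply: trmx_inj; rewrite trmx0; apply: Ainj.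
by rewrite -[A]trmxK -trmx_mul vA0 trmx0.
Qed.

Lemma mpinv_unitmx (R : realType) m (A : 'M[R]_m) : A \in unitmx -> mpinv A = invmx A.
Proof.
move=> Aunit; rewrite /mpinv; case: xgetP => [X _ [AXA _ _ _]|noX].
  have : invmx A *m (A *m X *m A) *m invmx A = invmx A *m A *m invmx A by rewrite AXA.
  by rewrite !mulmxA mulVmx // mul1mx mulmxK // mul1mx.
exfalso; apply: (noX (invmx A)); split.
- by rewrite mulmxV // mul1mx.
- by rewrite mulVmx // mul1mx.
- by rewrite mulmxV // trmx1.
- by rewrite mulVmx // trmx1.
Qed.

Section ConnectionGraph.
Variables (R : realType) (n d : nat).
Variables (w : 'I_n -> 'I_n -> R) (sigma : 'I_n -> 'I_n -> 'M[R]_d).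

Lemma hit_paths_pcons j x t (q : {ffun 'I_t.+1 -> 'I_n}) :
  (pcons x q \in hit_paths x j t.+1) = (x != j) && (q \in hit_paths (q ord0) j t).
Proof.
rewrite !inE pcons0 pcons_max !eqxx /=; case: (q ord_max == j) => /=; last by rewrite andbF.
apply/forallP/andP => [avoid_j|[x_j /forallP avoid_j] k].
  split; first by have := avoid_j ord0; rewrite pcons0.
  by apply/forallP=> l; have := avoid_j (lift ord0 l); rewrite lift0 pcons_lift ltnS.
apply/implyP; case: (unliftP ord0 k) => [l ->|->]; last by rewrite pcons0.
by rewrite lift0 pcons_lift ltnS; apply/implyP.
Qed.

Lemma big_hit_paths0 (V : zmodType) j x (F : {ffun 'I_1 -> 'I_n} -> V) :
  \sum_(p in hit_paths x j 0) F p = if x == j then F [ffun => x] else 0.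
Proof.
case: eqP => [<-|/eqP x_j].
  rewrite (_ : hit_paths x x 0 = [set [ffun => x]]) ?big_set1 //.
  apply/setP=> p; rewrite !inE; apply/idP/eqP => [/and3P [/eqP p0 _ _]|->].
    by apply/ffunP=> k; rewrite ffunE (ord1 k) p0.
  by rewrite !ffunE !eqxx; apply/forallP.
rewrite big_pred0 // => p; rewrite inE; apply/and3P => -[/eqP p0 /eqP p1 _].
by move: x_j; rewrite -p0 -p1 (_ : ord_max = ord0) ?eqxx //; apply: val_inj.
Qed.

Lemma big_hit_pathsS (V : zmodType) j x t (F : {ffun 'I_t.+2 -> 'I_n} -> V) :
  \sum_(p in hit_paths x j t.+1) F p =
  if x == j then 0 else \sum_y \sum_(q in hit_paths y j t) F (pcons x q).
Proof.
rewrite (reindex_onto (fun yq : 'I_n * {ffun 'I_t.+1 -> 'I_n} => pcons x yq.2)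
                      (fun p => (p (lift ord0 ord0), ptail p))); last first.
  by move=> p; rewrite inE => /andP [/eqP <- _]; apply: pcons_ptail.
case: eqP => [->|/eqP x_j].
  by rewrite big_pred0 // => yq; rewrite hit_paths_pcons eqxx.
rewrite pair_big_dep; apply: eq_bigl => -[y q] /=.
rewrite hit_paths_pcons x_j pcons_lift ptail_pcons xpair_eqE eqxx andbT !inE.
by rewrite eqxx /= andbC.
Qed.

Lemma path_prob_pcons t x (q : {ffun 'I_t.+1 -> 'I_n}) :
  path_prob w (pcons x q) = w x (q ord0) / deg w x * path_prob w q.
Proof.
rewrite /path_prob big_ord_recl pcons_inord0 pcons_inord1; congr (_ * _).
apply: eq_bigr => l _; rewrite lift0 !pcons_inordS ?ltnS ?ltn_ord //.
exact: ltnW.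
Qed.

Lemma path_hol_pcons t x (q : {ffun 'I_t.+1 -> 'I_n}) :
  path_hol sigma (pcons x q) = sigma x (q ord0) *m path_hol sigma q.
Proof.
rewrite /path_hol /= pcons_inord0 pcons_inord1; congr (_ *m _).
rewrite -[iota 1 t]/(iota (1 + 0) t) iotaDl -map_comp; congr foldr.
apply/eq_in_map => l; rewrite mem_iota add0n => /= lt_lt.
by rewrite add1n !pcons_inordS ?ltnS // ltnW.
Qed.

Lemma Omega_term0 x j : Omega_term w sigma x j 0 = if x == j then 1%:M else 0.
Proof.
rewrite /Omega_term big_hit_paths0; case: eqP => // _.
by rewrite /path_prob /path_hol big_ord0 scale1r.
Qed.

Lemma Omega_termS x j t : Omega_term w sigma x j t.+1 =
  if x == j then 0 else \sum_y (w x y / deg w x) *: (sigma x y *m Omega_term w sigma y j t).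
Proof.
rewrite /Omega_term big_hit_pathsS; case: eqP => // _.
apply: eq_bigr => y _; rewrite mulmx_sumr scaler_sumr; apply: eq_bigr => q.
rewrite inE => /and3P [/eqP q0 _ _].
by rewrite path_prob_pcons path_hol_pcons q0 -scalemxAr scalerA.
Qed.

Definition hit_prob x j t : R := \sum_(p in hit_paths x j t) path_prob w p.

Lemma hit_prob0 x j : hit_prob x j 0 = (x == j)%:R.
Proof.
by rewrite /hit_prob big_hit_paths0; case: eqP => // _; rewrite /path_prob big_ord0.
Qed.

Lemma hit_probS x j t : hit_prob x j t.+1 =
  if x == j then 0 else \sum_y w x y / deg w x * hit_prob y j t.
Proof.
rewrite /hit_prob big_hit_pathsS; case: eqP => // _.
apply: eq_bigr => y _; rewrite mulr_sumr; apply: eq_bigr => q.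
by rewrite inE => /and3P [/eqP q0 _ _]; rewrite path_prob_pcons q0.
Qed.

Definition Omega_partial x j T : 'M[R]_d := \sum_(t < T) Omega_term w sigma x j t.

Lemma Omega_partialS x j T : Omega_partial x j T.+1 =
  if x == j then 1%:M else \sum_y (w x y / deg w x) *: (sigma x y *m Omega_partial y j T).
Proof.
rewrite /Omega_partial big_ord_recl Omega_term0.
under eq_bigr => t _ do rewrite lift0 Omega_termS.
case: eqP => _; first by rewrite big1 ?addr0.
rewrite add0r exchange_big /=; apply: eq_bigr => y _.
by rewrite mulmx_sumr scaler_sumr.
Qed.

Hypothesis Hw : is_weighted_graph w.
Hypothesis Hsig : is_connection w sigma.

Lemma weight_ge0 x y : 0 <= w x y.
Proof. by case: Hw. Qed.

Lemma weight_gt0 x y : (0 < w x y) = (w x y != 0).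
Proof. by rewrite lt_def weight_ge0 andbT. Qed.

Lemma deg_ge0 x : 0 <= deg w x.
Proof. by apply: sumr_ge0 => y _; apply: weight_ge0. Qed.

Lemma weight_deg0 x y : deg w x = 0 -> w x y = 0.
Proof. by move=> deg0; apply: (psumr_eq0P _ deg0) => // z _; apply: weight_ge0. Qed.

Lemma trans_prob_ge0 x y : 0 <= w x y / deg w x.
Proof. by rewrite divr_ge0 ?weight_ge0 ?deg_ge0. Qed.

(* Not an equality: at an isolated vertex, division by [deg w x = 0] yields 0. *)
Lemma sum_trans_prob_le1 x : \sum_y w x y / deg w x <= 1.
Proof.
rewrite -mulr_suml -/(deg w x).
by have [->|deg_neq0] := eqVneq (deg w x) 0; rewrite ?invr0 ?mulr0 ?divff.
Qed.

Lemma path_prob_ge0 t (p : {ffun 'I_t.+1 -> 'I_n}) : 0 <= path_prob w p.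
Proof. by apply: prodr_ge0 => l _; apply: trans_prob_ge0. Qed.

Lemma hit_prob_ge0 x j t : 0 <= hit_prob x j t.
Proof. by apply: sumr_ge0 => p _; apply: path_prob_ge0. Qed.

Lemma sum_hit_prob_le1 x j T : \sum_(t < T) hit_prob x j t <= 1.
Proof.
elim: T x => [|T IHT] x; first by rewrite big_ord0.
rewrite big_ord_recl hit_prob0.
under eq_bigr => t _ do rewrite lift0 hit_probS.
case: eqP => _; first by rewrite big1 ?addr0.
rewrite add0r exchange_big /=; apply: le_trans (sum_trans_prob_le1 x).
apply: ler_sum => y _; rewrite -mulr_sumr.
by apply: ler_piMr; [apply: trans_prob_ge0 | apply: IHT].
Qed.

Lemma path_hol_orthomx t (p : {ffun 'I_t.+1 -> 'I_n}) : path_prob w p != 0 ->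
  (path_hol sigma p)^T *m path_hol sigma p = 1%:M.
Proof.
move=> p_neq0; apply: orthomx_foldr_mulmx; rewrite all_map.
apply/allP => l; rewrite mem_iota add0n /= => lt_lt; apply/eqP.
have w_gt0 : 0 < w (p (inord l)) (p (inord l.+1)).
  rewrite weight_gt0; apply: contraNneq p_neq0 => w0.
  by apply/prodf_eq0; exists (Ordinal lt_lt) => //=; rewrite w0 mul0r.
by have [_ ->] := Hsig w_gt0.
Qed.

Lemma norm_Omega_term_le x j t a b : `|Omega_term w sigma x j t a b| <= hit_prob x j t.
Proof.
rewrite summxE; apply: le_trans (ler_norm_sum _ _ _) _; apply: ler_sum => p _.
rewrite mxE normrM ger0_norm ?path_prob_ge0 //.
have [->|p_neq0] := eqVneq (path_prob w p) 0; first by rewrite mul0r.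
by rewrite ler_piMr ?path_prob_ge0 // orthomx_entry_le1 // path_hol_orthomx.
Qed.

Local Open Scope classical_set_scope.

Lemma Omega_partial_cvg x j a b :
  (fun T => Omega_partial x j T a b) @ \oo --> Omega0 w sigma x j a b.
Proof.
have -> : (fun T => Omega_partial x j T a b) = series (fun t => Omega_term w sigma x j t a b).
  by apply: funext => T; rewrite /series /= big_mkord summxE.
rewrite mxE; apply: normed_cvg; apply: (series_le_cvg (v_ := hit_prob x j)).
- by move=> t; apply: normr_ge0.
- by move=> t; apply: hit_prob_ge0.
- by move=> t; apply: norm_Omega_term_le.
apply: nondecreasing_is_cvgn.
  by apply: (nondecreasing_series (P := predT)) => t _ _; apply: hit_prob_ge0.
by exists 1 => _ [T _ <-]; rewrite /series /= big_mkord sum_hit_prob_le1.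
Qed.

Lemma Omega0_entry_lim x j a b l :
  (fun T => Omega_partial x j T.+1 a b) @ \oo --> l -> Omega0 w sigma x j a b = l.
Proof.
move=> cvg_l; apply: norm_cvg_unique (@Omega_partial_cvg x j a b) _.
by rewrite /mkset -cvg_shiftS.
Qed.

Lemma Omega0_target j : Omega0 w sigma j j = 1%:M.
Proof.
apply/matrixP => a b; apply: Omega0_entry_lim.
by under eq_cvg do rewrite Omega_partialS eqxx; apply: cvg_cst.
Qed.

Lemma Omega0_step x j : x != j ->
  Omega0 w sigma x j = \sum_y (w x y / deg w x) *: (sigma x y *m Omega0 w sigma y j).
Proof.
move=> x_j; apply/matrixP => a b; apply: Omega0_entry_lim.
under eq_cvg do rewrite Omega_partialS (negbTE x_j) summxE.
rewrite summxE; apply: cvg_big => [|y _]; first exact: add_continuous.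
under eq_cvg do rewrite !mxE.
rewrite !mxE; apply: cvgMl_tmp; apply: cvg_big => [|c _]; first exact: add_continuous.
by apply: cvgMl_tmp; apply: Omega_partial_cvg.
Qed.

Definition lap p (Z : 'I_n -> 'M[R]_(d, p)) x : 'M[R]_(d, p) :=
  deg w x *: Z x - \sum_y w x y *: (sigma x y *m Z y).

Lemma conn_lapE x a y c : conn_lap w sigma (x, a) (y, c) =
  (x == y)%:R * (deg w x * (a == c)%:R) - w x y * sigma x y a c.
Proof.
rewrite /conn_lap /=; have [<-|_] := eqVneq x y; last by rewrite mul0r sub0r.
by have [_ _ ->] := Hw; rewrite mul0r subr0 mul1r.
Qed.

Lemma conn_lap_mulE p (Z : 'I_n -> 'M[R]_(d, p)) x a b :
  \sum_v conn_lap w sigma (x, a) v * Z v.1 v.2 b = lap Z x a b.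
Proof.
rewrite (_ : \sum_v _ = \sum_y \sum_c conn_lap w sigma (x, a) (y, c) * Z y c b); last first.
  by rewrite pair_big; apply: eq_bigr => -[].
rewrite !mxE summxE.
under eq_bigr => y _ do under eq_bigr => c _ do rewrite conn_lapE mulrBl.
under eq_bigr => y _ do rewrite sumrB.
rewrite sumrB; congr (_ - _).
  rewrite (bigD1 x) //= [X in _ + X]big1 => [|y y_x]; last first.
    by rewrite big1 // => c _; rewrite eq_sym (negbTE y_x) !mul0r.
  rewrite addr0 (bigD1 a) //= [X in _ + X]big1 => [|c c_a]; last first.
    by rewrite eq_sym (negbTE c_a) !mulr0 mul0r.
  by rewrite !eqxx !mul1r mulr1 !addr0.
apply: eq_bigr => y _; rewrite !mxE mulr_sumr.
by apply: eq_bigr => c _; rewrite mulrA.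
Qed.

Lemma lap_Omega0 x j : x != j -> lap (Omega0 w sigma ^~ j) x = 0.
Proof.
move=> x_j; apply/eqP; rewrite subr_eq0 (Omega0_step x_j) scaler_sumr; apply/eqP.
apply: eq_bigr => y _; rewrite scalerA mulrCA.
have [deg0|deg_neq0] := eqVneq (deg w x) 0; last by rewrite divff ?mulr1.
by rewrite weight_deg0 // !mul0r.
Qed.

Lemma edge_energyE (Z : 'I_n -> 'cV[R]_d) x y :
  w x y * sqnorm (Z x - sigma x y *m Z y) =
  w x y * (sqnorm (Z x) + sqnorm (Z y)) - 2 * (w x y * dotmx (Z x) (sigma x y *m Z y)).
Proof.
have [->|w_neq0] := eqVneq (w x y) 0; first by rewrite !mul0r mulr0 subr0.
move: w_neq0; rewrite -weight_gt0 => /Hsig [_ sigma_orth].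
by rewrite sqnormB sqnorm_orthomx //; ring.
Qed.

Lemma dotmx_lap (Z : 'I_n -> 'cV[R]_d) x : dotmx (Z x) (lap Z x) =
  deg w x * sqnorm (Z x) - \sum_y w x y * dotmx (Z x) (sigma x y *m Z y).
Proof.
rewrite /lap dotmxBr dotmxZr dotmx_sumr.
by under eq_bigr => y _ do rewrite dotmxZr.
Qed.

Lemma energy_identity (Z : 'I_n -> 'cV[R]_d) :
  \sum_x \sum_y w x y * sqnorm (Z x - sigma x y *m Z y) =
  2 * \sum_x dotmx (Z x) (lap Z x).
Proof.
have wsym x y : w x y = w y x by case: Hw.
set S := \sum_x deg w x * sqnorm (Z x).
set D := \sum_x \sum_y w x y * dotmx (Z x) (sigma x y *m Z y).
have sq_left : \sum_x \sum_y w x y * sqnorm (Z x) = S.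
  by apply: eq_bigr => x _; rewrite /deg mulr_suml.
have sq_right : \sum_x \sum_y w x y * sqnorm (Z y) = S.
  rewrite exchange_big; apply: eq_bigr => y _; rewrite /deg mulr_suml.
  by apply: eq_bigr => x _; rewrite wsym.
under eq_bigr => x _ do under eq_bigr => y _ do rewrite edge_energyE mulrDr.
under [in RHS]eq_bigr => x _ do rewrite dotmx_lap.
rewrite sumrB -/S -/D; under eq_bigr => x _ do rewrite sumrB big_split -mulr_sumr.
rewrite sumrB big_split -mulr_sumr /= sq_left sq_right -/D; ring.
Qed.

Hypothesis Hconn : graph_connected w.

Lemma energy_eq0 (Z : 'I_n -> 'cV[R]_d) j :
  Z j = 0 -> \sum_x dotmx (Z x) (lap Z x) = 0 -> forall x, Z x = 0.
Proof.
move=> Zj energy0 x.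
have edge_ge0 x1 y : 0 <= w x1 y * sqnorm (Z x1 - sigma x1 y *m Z y).
  by rewrite mulr_ge0 ?weight_ge0 ?sqnorm_ge0.
have row_ge0 x1 : 0 <= \sum_y w x1 y * sqnorm (Z x1 - sigma x1 y *m Z y).
  by apply: sumr_ge0 => y _; apply: edge_ge0.
have : \sum_x1 \sum_y w x1 y * sqnorm (Z x1 - sigma x1 y *m Z y) = 0.
  by rewrite energy_identity energy0 mulr0.
move=> /(psumr_eq0P (fun x1 _ => row_ge0 x1)) rows0.
have sqnorm_edge x1 y : 0 < w x1 y -> sqnorm (Z x1) = sqnorm (Z y).
  move=> w_gt0; have [_ sigma_orth] := Hsig w_gt0.
  have /eqP := psumr_eq0P (fun y _ => edge_ge0 x1 y) (rows0 x1 isT) (i := y) isT.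
  rewrite mulf_eq0 (gt_eqF w_gt0) /= => /eqP /sqnorm_eq0 /eqP.
  by rewrite subr_eq0 => /eqP ->; rewrite sqnorm_orthomx.
have closed0 : fingraph.closed [rel u v | 0 < w u v] [pred y | sqnorm (Z y) == 0].
  by move=> y1 y2 /= w_gt0; rewrite !inE (sqnorm_edge _ _ w_gt0).
apply/sqnorm_eq0/eqP.
rewrite -[_ == 0]/(x \in [pred y | sqnorm (Z y) == 0]).
by rewrite (closed_connect closed0 (Hconn x j)) inE Zj /sqnorm dotmx0l.
Qed.

Section Blocks.
Variables i j : 'I_n.
Hypothesis Hij : i != j.

Local Notation Int := (Defs.interior d i j).

Lemma bnd_lshift a : bnd i j (lshift d a) = (i, a).
Proof. by rewrite /bnd (unsplitK (inl _ a)). Qed.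

Lemma bnd_rshift a : bnd i j (rshift d a) = (j, a).
Proof. by rewrite /bnd (unsplitK (inr _ a)). Qed.

Lemma intv_interior (k : 'I_#|Int|) : ((intv k).1 != i) && ((intv k).1 != j).
Proof. by have := enum_valP k; rewrite inE. Qed.

Lemma intv_onto x a : x != i -> x != j -> exists k : 'I_#|Int|, intv k = (x, a).
Proof.
move=> x_i x_j; have xa_in : (x, a) \in Int by rewrite inE x_i x_j.
by exists (enum_rank_in xa_in (x, a)); rewrite /intv enum_rankK_in.
Qed.

Lemma sum_bnd_int (F : 'I_n * 'I_d -> R) :
  \sum_u F u = \sum_k F (bnd i j k) + \sum_(k < #|Int|) F (intv k).
Proof.
have -> : \sum_(k < #|Int|) F (intv k) = \sum_(u in Int) F u.
  by rewrite /intv -(big_enum_val (A := mem Int)).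
have -> : \sum_u F u = \sum_x \sum_a F (x, a) by rewrite pair_big; apply: eq_bigr => -[].
rewrite big_split_ord (bigD1 i) // (bigD1 j) /=; last by rewrite eq_sym.
rewrite addrA; congr (_ + _ + _).
- by apply: eq_bigr => a _; rewrite bnd_lshift.
- by apply: eq_bigr => a _; rewrite bnd_rshift.
by rewrite pair_big_dep; apply: eq_big => -[x a]; rewrite ?inE ?andbT.
Qed.

Definition bnd_part p (Z : 'I_n -> 'M[R]_(d, p)) : 'M[R]_(d + d, p) :=
  \matrix_(k, b) Z (bnd i j k).1 (bnd i j k).2 b.
Definition int_part p (Z : 'I_n -> 'M[R]_(d, p)) : 'M[R]_(#|Int|, p) :=
  \matrix_(k, b) Z (intv k).1 (intv k).2 b.

Lemma bnd_part_col p (Z : 'I_n -> 'M[R]_(d, p)) : bnd_part Z = col_mx (Z i) (Z j).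
Proof.
apply/matrixP => k b; rewrite -[k]splitK; case: (fintype.split k) => a.
  by rewrite col_mxEu mxE bnd_lshift.
by rewrite col_mxEd mxE bnd_rshift.
Qed.

Lemma exists_blocks p (B : 'M[R]_(d + d, p)) (C : 'M[R]_(#|Int|, p)) :
  exists Z : 'I_n -> 'M[R]_(d, p), bnd_part Z = B /\ int_part Z = C.
Proof.
exists (fun x => \matrix_(a, b) if [pick k | intv k == (x, a)] is Some k then C k b
                  else B (if x == i then lshift d a else rshift d a) b).
split; apply/matrixP => k b; rewrite !mxE.
  case: pickP => [k' /eqP intv_k'|_].
    have := intv_interior k'; rewrite intv_k' -[k]splitK.
    by case: (fintype.split k) => a; rewrite ?bnd_lshift ?bnd_rshift eqxx ?andbF.
  rewrite -[k]splitK; case: (fintype.split k) => a /=.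
    by rewrite bnd_lshift eqxx.
  by rewrite bnd_rshift eq_sym (negbTE Hij).
case: pickP => [k' /eqP|/(_ k)]; last by rewrite -surjective_pairing eqxx.
by rewrite -surjective_pairing => /enum_val_inj ->.
Qed.

Lemma lap_bnd_part p (Z : 'I_n -> 'M[R]_(d, p)) :
  LA w sigma i j *m bnd_part Z + LB w sigma i j *m int_part Z = bnd_part (lap Z).
Proof.
apply/matrixP => k b; rewrite [RHS]mxE -conn_lap_mulE sum_bnd_int !mxE.
by congr (_ + _); apply: eq_bigr => l _; rewrite !mxE.
Qed.

Lemma lap_int_part p (Z : 'I_n -> 'M[R]_(d, p)) :
  LC w sigma i j *m bnd_part Z + LD w sigma i j *m int_part Z = int_part (lap Z).
Proof.
apply/matrixP => k b; rewrite [RHS]mxE -conn_lap_mulE sum_bnd_int !mxE.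
by congr (_ + _); apply: eq_bigr => l _; rewrite !mxE.
Qed.

Lemma dirichlet_eq0 (Z : 'I_n -> 'cV[R]_d) :
  Z j = 0 -> dotmx (Z i) (lap Z i) = 0 -> int_part (lap Z) = 0 -> forall x, Z x = 0.
Proof.
move=> Zj0 energy_i lap_int0; apply: (energy_eq0 Zj0); apply: big1 => x _.
have [->//|x_i] := eqVneq x i; have [->|x_j] := eqVneq x j; first by rewrite Zj0 dotmx0l.
suff -> : lap Z x = 0 by rewrite dotmx0r.
apply/matrixP => a b; have [k intv_k] := intv_onto a x_i x_j.
by have := congr1 (fun M : 'M[R]_(#|Int|, 1) => M k b) lap_int0; rewrite !mxE intv_k.
Qed.

Lemma LD_unit : LD w sigma i j \in unitmx.
Proof.
apply: unitmx_ker_col => v LDv0.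
have [Z [ZB ZI]] := exists_blocks 0 v.
have /eqP := bnd_part_col Z; rewrite ZB eq_sym col_mx_eq0 => /andP[/eqP Zi0 /eqP Zj0].
have lap_int0 : int_part (lap Z) = 0 by rewrite -lap_int_part ZB ZI LDv0 mulmx0 addr0.
have energy_i : dotmx (Z i) (lap Z i) = 0 by rewrite Zi0 dotmx0l.
have Z0 := dirichlet_eq0 Zj0 energy_i lap_int0.
by rewrite -ZI; apply/matrixP => k b; rewrite !mxE Z0 mxE.
Qed.

Lemma conductance_harmonic p (Z : 'I_n -> 'M[R]_(d, p)) :
  int_part (lap Z) = 0 -> conductance w sigma i j *m bnd_part Z = bnd_part (lap Z).
Proof.
move=> lap_int0; have /eqP := lap_int_part Z.
rewrite lap_int0 addrC addr_eq0 => /eqP LDZ.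
have ZI : int_part Z = - (invmx (LD w sigma i j) *m (LC w sigma i j *m bnd_part Z)).
  by rewrite -mulmxN -LDZ mulKmx ?LD_unit.
rewrite -lap_bnd_part ZI /conductance mpinv_unitmx ?LD_unit //.
by rewrite mulmxBl mulmxN -!mulmxA.
Qed.

Lemma usubmx_conductance_mul p (Y1 Y2 : 'M[R]_(d, p)) :
  usubmx (conductance w sigma i j *m col_mx Y1 Y2) =
  C_ii w sigma i j *m Y1 + C_ij w sigma i j *m Y2.
Proof. by rewrite -{1}(submxK (conductance w sigma i j)) mul_block_col col_mxKu. Qed.

Lemma Cii_unit : C_ii w sigma i j \in unitmx.
Proof.
apply: unitmx_ker_col => v Cv0.
pose B := col_mx v (0 : 'cV[R]_d).
have [Z [ZB ZI]] := exists_blocks B (- (invmx (LD w sigma i j) *m (LC w sigma i j *m B))).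
have lap_int0 : int_part (lap Z) = 0.
  by rewrite -lap_int_part ZB ZI mulmxN mulKVmx ?LD_unit // addrN.
have := bnd_part_col Z; rewrite ZB => /eq_col_mx [vZi Zj0].
have lap_i0 : lap Z i = 0.
  have := usubmx_conductance_mul v 0; rewrite -/B -ZB conductance_harmonic //.
  by rewrite bnd_part_col col_mxKu Cv0 mulmx0 addr0.
have energy_i : dotmx (Z i) (lap Z i) = 0 by rewrite lap_i0 dotmx0r.
have Z0 := dirichlet_eq0 (esym Zj0) energy_i lap_int0.
by rewrite vZi Z0.
Qed.

Lemma Omega0_schur : C_ii w sigma i j *m Omega0 w sigma i j + C_ij w sigma i j = 0.
Proof.
have lap_int0 : int_part (lap (Omega0 w sigma ^~ j)) = 0.
  apply/matrixP => k b; have /andP[_ intv_j] := intv_interior k.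
  by rewrite mxE lap_Omega0 // !mxE.
have := usubmx_conductance_mul (Omega0 w sigma i j) 1%:M.
rewrite mulmx1 -(Omega0_target j) -(bnd_part_col (Omega0 w sigma ^~ j)).
by rewrite conductance_harmonic // bnd_part_col col_mxKu lap_Omega0.
Qed.

End Blocks.
End ConnectionGraph.

Theorem lemma5p4 (R : realType) (n d : nat)
  (w : 'I_n -> 'I_n -> R) (sigma : 'I_n -> 'I_n -> 'M[R]_d)
  (Hw : is_weighted_graph w) (Hconn : graph_connected w)
  (Hsig : is_connection w sigma)
  (i j : 'I_n) (Hij : i != j) :
  C_ii w sigma i j \in unitmx /\
  Omega0 w sigma i j = - (invmx (C_ii w sigma i j) *m C_ij w sigma i j).
Proof.
have Cii_invertible := Cii_unit Hw Hsig Hconn Hij.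
split => //.
rewrite -(mulKmx Cii_invertible (Omega0 w sigma i j)) -mulmxN; congr (_ *m _).
by apply/eqP; rewrite -addr_eq0 (Omega0_schur Hw Hsig Hconn Hij).
Qed.
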